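(* Consider the cone percolation process on $\mathbb{T}_d^+$ ($d\ge 2$) with radius of influence distributed as $R$, where $p_0=\mathbb{P}(R=0)\in(0,1)$. (I) If $\mathbb{E}(d^R) > 1 + p_0$ (including the case $\mathbb{E}(d^R)=\infty$), then $\mathbb{P}_+[V] > 0$. (II) If $\mathbb{E}(d^R) \le 2 - \frac{1}{d}$, then $\mathbb{P}_+[V] = 0$.
   Context: Let $d\ge 2$ and let $\mathbb{T}_d$ be the infinite tree in which every vertex has exactly $d+1$ neighbours. Fix a vertex $\mathcal{O}$ (the origin); $d(u,v)$ denotes graph distance. Write $u\le v$ if $u$ lies on the path from $\mathcal{O}$ to $v$ (so $\mathcal{O}\le v$ for all $v$). Fix a neighbour $w$ of $\mathcal{O}$ and let $\mathbb{T}_d^+$ be the subtree obtained by deleting all vertices $x$ with $w\le x$; in $\mathbb{T}_d^+$ every vertex $u$ has exactly $d$ neighbours $x$ with $u\le x$ (its children). Let $R$ be a random variable with values in $\{0,1,2,\dots\}$, $p_k=\mathbb{P}(R=k)$, and assume $p_0\in(0,1)$. Cone percolation on $G\in\{\mathbb{T}_d,\mathbb{T}_d^+\}$: to each vertex $u$ of $G$ attach an independent copy $R_u$ of $R$; let $B_u=\{v\in G: u\le v,\ d(u,v)\le R_u\}$; set $I_0=\{\mathcal{O}\}$, $I_{n+1}=\bigcup_{u\in I_n}B_u$ for $n\ge0$, $I=\bigcup_{n\ge0}I_n$, and let $V$ be the event $\{|I|=\infty\}$ (survival). $\mathbb{P}_+$ and $\mathbb{P}$ denote the probability measures of the process on $\mathbb{T}_d^+$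 and on $\mathbb{T}_d$ respectively. *)

From Stdlib Require Import Reals List Arith Lia ClassicalEpsilon.
Import ListNotations.
Open Scope R_scope.

(* Vertices of T_d^+ : words over {0,...,d-1}; the word records the path of
   child indices from the origin O (= the empty word).  In T_d^+ every vertex
   (including O, whose neighbour w was deleted) has exactly d children, so
   T_d^+ is the rooted d-ary tree.  u <= v  iff  u is a prefix of v, and
   d(u,v) = length v - length u for such u, v. *)
Definition word := list nat.

Fixpoint words (d k : nat) : list word :=
  match k with
  | O => [ [] ]
  | S k' => flat_map (fun w => map (fun i => w ++ [i]) (seq 0 d)) (words d k')
  end.

Definition verts_below (d n : nat) : list word := flat_map (words d) (seq 0 n).

(* Given radii c : word -> nat, the set I of vertices eventually influenced:
   O is in I; if u is in I then every v with u <= v and d(u,v) <= c u is in I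
   (that is, B_u is contained in I). *)
Inductive active (d : nat) (c : word -> nat) : word -> Prop :=
| act_root : active d c []
| act_step : forall u s, active d c u -> Forall (fun i => (i < d)%nat) s ->
    (length s <= c u)%nat -> active d c (u ++ s).

Fixpoint psum (f : nat -> R) (n : nat) : R :=
  match n with O => 0 | S m => psum f m + f m end.

(* law of min(R, n) *)
Definition qtrunc (p : nat -> R) (n r : nat) : R :=
  if (r <? n)%nat then p r else 1 - psum p n.

Definition upd (c : word -> nat) (v : word) (r : nat) : word -> nat :=
  fun w => if list_eq_dec Nat.eq_dec w v then r else c w.

(* expectation of F over independent radii min(R_v, n), v in vs *)
Fixpoint csum (p : nat -> R) (n : nat) (vs : list word) (c : word -> nat)
  (F : (word -> nat) -> R) : R :=
  match vs with
  | [] => F c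
  | v :: vs' => psum (fun r => qtrunc p n r * csum p n vs' (upd c v r) F) (S n)
  end.

Definition ind (P : Prop) : R :=
  if excluded_middle_informative P then 1 else 0.

(* P_+[ I contains a vertex at depth n ].  This event depends only on the
   radii of the vertices of depth < n, truncated at n, so its probability is
   the finite sum below. *)
Definition reach_prob (d : nat) (p : nat -> R) (n : nat) : R :=
  csum p n (verts_below d n) (fun _ => 0%nat)
    (fun c => ind (exists v, In v (words d n) /\ active d c v)).

(* {|I| = oo} is the decreasing intersection of the events above, so
   P_+[V] = lim_n reach_prob d p n. *)
Definition survives_pos (d : nat) (p : nat -> R) : Prop :=
  exists eps, eps > 0 /\ forall n, reach_prob d p n >= eps.

Definition dies_as (d : nat) (p : nat -> R) : Prop :=
  Un_cv (reach_prob d p) 0.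

Definition dR_term (d : nat) (p : nat -> R) (k : nat) : R := p k * INR d ^ k.

(* Let [reach_boost d p n k] be the probability that the cluster of the root
   reaches depth [n] when the radius of the root is raised to at least [k].
   Given the root radius [rho = max R k >= 1], the cluster reaches depth [n + 1]
   iff one of the [d] children reaches depth [n] with its own radius raised to
   [rho - 1]; the children's subtrees carry independent radii, which yields a
   closed recursion for [reach_boost], and [reach_prob d p n = reach_boost d p n 0].

   (I) A root of radius [r >= 1] reaches depth [n] as soon as one of its [d ^ r]
   descendants at depth [r] reaches [n - r] generations further.  Hence every
   [eps] with [eps <= E (1 - (1 - eps) ^ (d ^ R); R >= 1)] bounds all the reach
   probabilities from below, and a second order expansion produces such an
   [eps > 0] as soon as [E (d ^ R; R >= 1) > 1], i.e. [E d^R > 1 + p_0].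

   (II) The cluster of a root of radius [r] dies out if the clusters of all the
   [K_r = d + ... + d^r] vertices of its cone do, so the extinction probability
   [a_n = 1 - reach_boost d p n 0] satisfies [a_(m+1) >= E a_(m-N) ^ K_R] up to
   the tail beyond [N].  The hypothesis [E d^R <= 2 - 1/d] says [E K_R <= 1], and
   the strict convexity of [x ^ K] for [K >= 2] then makes [a] grow by a fixed
   amount every [N + 1] generations as long as [reach_boost d p n 0 >= eps];
   since [a_n <= 1], the reach probabilities must tend to [0]. *)

From Stdlib Require Import Reals List Arith Lia Lra Permutation FunctionalExtensionality ClassicalEpsilon.
Import ListNotations.
Open Scope R_scope.

Arguments psum : simpl never.

Lemma psum_O f : psum f 0 = 0.
Proof. reflexivity. Qed.

Lemma psum_S f n : psum f (S n) = psum f n + f n.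
Proof. reflexivity. Qed.

Lemma psum_ext f g n : (forall r, (r < n)%nat -> f r = g r) -> psum f n = psum g n.
Proof.
  induction n; intros H; [reflexivity|].
  rewrite !psum_S, IHn by (intros; apply H; lia).
  rewrite H by lia; reflexivity.
Qed.

Lemma psum_plus f g n : psum (fun r => f r + g r) n = psum f n + psum g n.
Proof. induction n; [rewrite !psum_O; ring|]. rewrite !psum_S, IHn; ring. Qed.

Lemma psum_scal a f n : a * psum f n = psum (fun r => a * f r) n.
Proof. induction n; [rewrite !psum_O; ring|]. rewrite !psum_S, <- IHn; ring. Qed.

Lemma psum_const0 n : psum (fun _ => 0) n = 0.
Proof. induction n; [reflexivity|]. rewrite psum_S, IHn; ring. Qed.

Lemma psum_exch f n m :
  psum (fun r => psum (fun s => f r s) m) n = psum (fun s => psum (fun r => f r s) n) m.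
Proof.
  induction n.
  - rewrite psum_O, (psum_ext _ (fun _ => 0)), psum_const0 by reflexivity; reflexivity.
  - rewrite psum_S, IHn, <- psum_plus; reflexivity.
Qed.

Lemma psum_split f n m : psum f (n + m) = psum f n + psum (fun r => f (n + r)%nat) m.
Proof.
  induction m; [rewrite Nat.add_0_r, psum_O; ring|].
  rewrite Nat.add_succ_r, !psum_S, IHm; ring.
Qed.

Lemma psum_shift f n : psum f (S n) = f 0%nat + psum (fun r => f (S r)) n.
Proof. induction n; [rewrite psum_S, !psum_O; ring|]. rewrite psum_S, IHn, psum_S; ring. Qed.

Lemma psum_le f g n : (forall r, (r < n)%nat -> f r <= g r) -> psum f n <= psum g n.
Proof.
  induction n; intros H; [rewrite !psum_O; lra|].
  rewrite !psum_S. pose proof (H n ltac:(lia)).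
  pose proof (IHn ltac:(intros; apply H; lia)). lra.
Qed.

Lemma psum_nonneg f n : (forall r, 0 <= f r) -> 0 <= psum f n.
Proof.
  intros H. rewrite <- (psum_const0 n). apply psum_le; auto.
Qed.

Lemma psum_mono f n m : (forall r, 0 <= f r) -> (n <= m)%nat -> psum f n <= psum f m.
Proof.
  intros H Hnm. replace m with (n + (m - n))%nat by lia. rewrite psum_split.
  pose proof (psum_nonneg (fun r => f (n + r)%nat) (m - n) (fun r => H _)). lra.
Qed.

Lemma psum_ge_term f n r0 : (forall r, 0 <= f r) -> (r0 < n)%nat -> f r0 <= psum f n.
Proof.
  intros H Hr. induction n; [lia|]. rewrite psum_S.
  destruct (Nat.eq_dec r0 n) as [->|].
  - pose proof (psum_nonneg f n H); lra.
  - pose proof (IHn ltac:(lia)). specialize (H n). lra.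
Qed.

Lemma sum_f_R0_psum f n : sum_f_R0 f n = psum f (S n).
Proof.
  induction n; [rewrite psum_S, psum_O; simpl; ring|].
  simpl sum_f_R0. rewrite IHn, (psum_S _ (S n)); reflexivity.
Qed.

Lemma psum_le_infinite_sum f l : (forall r, 0 <= f r) -> infinite_sum f l ->
  forall n, psum f n <= l.
Proof.
  intros Hf Hs n. destruct (Rle_dec (psum f n) l) as [|Hn]; auto. exfalso.
  destruct (Hs (psum f n - l) ltac:(lra)) as [N HN].
  specialize (HN (Nat.max N n) ltac:(lia)). rewrite sum_f_R0_psum in HN.
  pose proof (psum_mono f n (S (Nat.max N n)) Hf ltac:(lia)).
  unfold R_dist in HN. apply Rabs_def2 in HN. lra.
Qed.

(** * Finite expectations over independent radii *)

Lemma upd_eq (c : word -> nat) v r : upd c v r v = r.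
Proof. unfold upd. destruct (list_eq_dec Nat.eq_dec v v); congruence. Qed.

Lemma upd_other (c : word -> nat) v r x : x <> v -> upd c v r x = c x.
Proof. intros. unfold upd. destruct (list_eq_dec Nat.eq_dec x v); congruence. Qed.

Lemma upd_comm (c : word -> nat) v w r s :
  v <> w -> upd (upd c v r) w s = upd (upd c w s) v r.
Proof.
  intros H. apply functional_extensionality. intro x. unfold upd.
  destruct (list_eq_dec Nat.eq_dec x w), (list_eq_dec Nat.eq_dec x v); subst; congruence.
Qed.

Lemma upd_self (c : word -> nat) v : upd c v (c v) = c.
Proof.
  apply functional_extensionality; intro x. unfold upd.
  destruct (list_eq_dec Nat.eq_dec x v); subst; reflexivity.
Qed.

Lemma qtrunc_mass p n : psum (qtrunc p n) (S n) = 1.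
Proof.
  rewrite psum_S, (psum_ext _ p).
  - unfold qtrunc. rewrite Nat.ltb_irrefl. ring.
  - intros r Hr. unfold qtrunc. apply Nat.ltb_lt in Hr. rewrite Hr. reflexivity.
Qed.

Definition indep_of (F : (word -> nat) -> R) (v : word) := forall c r, F (upd c v r) = F c.

Section FiniteExpectation.
Variables (p : nat -> R) (T : nat).

Lemma csum_ext l c F G : (forall c, F c = G c) -> csum p T l c F = csum p T l c G.
Proof. intros H. replace G with F by (apply functional_extensionality; auto). reflexivity. Qed.

Lemma csum_app l1 l2 c F :
  csum p T (l1 ++ l2) c F = csum p T l1 c (fun c1 => csum p T l2 c1 F).
Proof.
  revert c; induction l1; intros c; [reflexivity|].
  simpl. apply psum_ext; intros. rewrite IHl1. reflexivity.
Qed.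

Lemma csum_ext_at l v0 F G c : ~ In v0 l ->
  (forall c', c' v0 = c v0 -> F c' = G c') -> csum p T l c F = csum p T l c G.
Proof.
  revert c; induction l; intros c Hn H; simpl; auto.
  apply psum_ext; intros. f_equal. apply IHl.
  - intro; apply Hn; right; auto.
  - intros c' Hc. apply H. rewrite Hc. apply upd_other. intro; subst; apply Hn; left; auto.
Qed.

Lemma csum_linear l c a b F G :
  csum p T l c (fun c1 => a * F c1 + b * G c1) = a * csum p T l c F + b * csum p T l c G.
Proof.
  revert c; induction l; intros c; simpl; auto.
  rewrite !psum_scal, <- psum_plus. apply psum_ext; intros. rewrite IHl. ring.
Qed.

Lemma csum_const l c K : csum p T l c (fun _ => K) = K.
Proof.
  revert c; induction l; intros c; simpl; auto.
  rewrite (psum_ext _ (fun r => K * qtrunc p T r)) by (intros; rewrite IHl; ring).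
  rewrite <- psum_scal, qtrunc_mass. ring.
Qed.

Lemma csum_one_minus l c X : csum p T l c (fun c1 => 1 - X c1) = 1 - csum p T l c X.
Proof.
  rewrite (csum_ext _ _ _ (fun c1 => 1 * (fun _ => 1) c1 + (-1) * X c1)) by (intros; ring).
  rewrite csum_linear, csum_const. ring.
Qed.

Lemma csum_mul_indep l G : (forall v, In v l -> indep_of G v) ->
  forall c X, csum p T l c (fun c1 => X c1 * G c1) = csum p T l c X * G c.
Proof.
  induction l; intros HG c X; simpl; auto.
  rewrite Rmult_comm, psum_scal. apply psum_ext; intros.
  rewrite IHl by (intros; apply HG; right; auto).
  rewrite HG by (left; auto). ring.
Qed.

Lemma csum_indep_of l F v : indep_of F v -> ~ In v l -> indep_of (fun c => csum p T l c F) v.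
Proof.
  intros HF Hn c r. revert c. induction l; intros c; simpl; auto.
  apply psum_ext; intros. f_equal. rewrite upd_comm.
  - apply IHl. intro; apply Hn; right; auto.
  - intro; subst; apply Hn; left; auto.
Qed.

Lemma csum_swap x y l c F : csum p T (x :: y :: l) c F = csum p T (y :: x :: l) c F.
Proof.
  destruct (list_eq_dec Nat.eq_dec x y) as [->|Hxy]; auto.
  simpl. rewrite (psum_ext _ (fun r => psum (fun s => qtrunc p T r * (qtrunc p T s *
    csum p T l (upd (upd c x r) y s) F)) (S T))) by (intros; apply psum_scal).
  rewrite psum_exch. apply psum_ext; intros. rewrite psum_scal. apply psum_ext; intros.
  rewrite upd_comm by auto. ring.
Qed.

Lemma csum_perm l l' : Permutation l l' -> forall c F, csum p T l c F = csum p T l' c F.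
Proof.
  induction 1; intros c F; auto.
  - simpl. apply psum_ext; intros. rewrite IHPermutation; auto.
  - apply csum_swap.
  - rewrite IHPermutation1. auto.
Qed.

Definition shift (c : word -> nat) (i : nat) : word -> nat := fun w => c (i :: w).

Lemma shift_upd c i v r : shift (upd c (i :: v) r) i = upd (shift c i) v r.
Proof.
  apply functional_extensionality; intro w. unfold shift, upd.
  destruct (list_eq_dec Nat.eq_dec (i :: w) (i :: v)), (list_eq_dec Nat.eq_dec w v);
    subst; congruence.
Qed.

Lemma csum_relabel i L c G :
  csum p T (map (cons i) L) c (fun c1 => G (shift c1 i)) = csum p T L (shift c i) G.
Proof.
  revert c; induction L; intros c; simpl; auto.
  apply psum_ext; intros. rewrite IHL, shift_upd. auto.
Qed.

Definition prodl (f : nat -> R) (l : list nat) := fold_right (fun i acc => f i * acc) 1 l.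

Lemma prodl_ext f g l : (forall i, In i l -> f i = g i) -> prodl f l = prodl g l.
Proof. induction l; simpl; intros H; auto. rewrite H, IHl by (simpl; auto). auto. Qed.

Lemma prodl_const x l : prodl (fun _ => x) l = x ^ length l.
Proof. induction l; simpl; auto. rewrite IHl; auto. Qed.

Lemma prodl_indep_of (l : list nat) (K : nat -> (word -> nat) -> R) v :
  (forall i, In i l -> indep_of (K i) v) -> indep_of (fun c => prodl (fun i => K i c) l) v.
Proof.
  intros H c r. induction l; simpl; auto.
  rewrite H by (left; auto). rewrite IHl; auto. intros; apply H; right; auto.
Qed.

Lemma csum_prodl L l (H : nat -> (word -> nat) -> R) :
  NoDup l -> (forall i v, In i l -> (forall w, v <> i :: w) -> indep_of (H i) v) ->
  forall c, csum p T (flat_map (fun i => map (cons i) L) l) c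
              (fun c1 => prodl (fun i => H i c1) l)
   = prodl (fun i => csum p T (map (cons i) L) c (H i)) l.
Proof.
  induction l as [|a l IH]; intros Hl HH c; [reflexivity|].
  inversion Hl; subst. simpl. rewrite csum_app.
  assert (Hinner : forall c1, csum p T (flat_map (fun i => map (cons i) L) l) c1
            (fun c2 => H a c2 * prodl (fun i => H i c2) l) =
            prodl (fun i => csum p T (map (cons i) L) c1 (H i)) l * H a c1).
  { intros c1. rewrite (csum_ext _ _ _ (fun c2 => prodl (fun i => H i c2) l * H a c2))
      by (intros; ring).
    rewrite csum_mul_indep, IH; auto.
    - intros; apply HH; simpl; auto.
    - intros v Hv. apply in_flat_map in Hv. destruct Hv as [i [Hi Hv]].
      apply in_map_iff in Hv. destruct Hv as [w [<- _]].
      apply HH; [left; auto|]. intros w' Hw'. inversion Hw'; subst; auto. }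
  rewrite (csum_ext _ _ _ _ Hinner), Rmult_comm.
  rewrite (csum_ext _ _ _ (fun c1 => H a c1 *
    prodl (fun i => csum p T (map (cons i) L) c1 (H i)) l)) by (intros; ring).
  rewrite csum_mul_indep; [ring|].
  intros v Hv. apply in_map_iff in Hv. destruct Hv as [w [<- _]].
  apply prodl_indep_of. intros i Hi. apply csum_indep_of.
  - apply HH; [right; auto|]. intros w' Hw'. inversion Hw'; subst; auto.
  - intros Hin. apply in_map_iff in Hin. destruct Hin as [w' [Hw' _]]. inversion Hw'; subst; auto.
Qed.

End FiniteExpectation.

(** * The d-ary tree *)

Section Tree.
Variable d : nat.

Lemma In_words k v : In v (words d k) <-> length v = k /\ Forall (fun i => (i < d)%nat) v.
Proof.
  revert v; induction k; intros v; simpl.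
  - split; [intros [<-|[]]; auto|].
    intros [H _]. destruct v; simpl in *; auto; lia.
  - rewrite in_flat_map. split.
    + intros [w [Hw Hv]]. apply in_map_iff in Hv. destruct Hv as [i [<- Hi]].
      apply IHk in Hw. destruct Hw as [Hl Hf]. apply in_seq in Hi.
      rewrite length_app; simpl. split; [lia|].
      apply Forall_app; split; auto. repeat constructor; lia.
    + intros [Hl Hf]. destruct (exists_last (l:=v)) as [w [i ->]].
      { destruct v; simpl in Hl; [lia|discriminate]. }
      apply Forall_app in Hf. destruct Hf as [Hf1 Hf2]. inversion Hf2; subst.
      rewrite length_app in Hl; simpl in Hl.
      exists w; split; [apply IHk; split; auto; lia|].
      apply in_map_iff. exists i; split; auto. apply in_seq; lia.
Qed.

Lemma NoDup_flat_map {A B} (f : A -> list B) l : NoDup l -> (forall x, In x l -> NoDup (f x)) ->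
  (forall x y z, In x l -> In y l -> x <> y -> In z (f x) -> ~ In z (f y)) ->
  NoDup (flat_map f l).
Proof.
  induction l; intros Hl Hf Hd; simpl; [constructor|].
  inversion Hl; subst. apply NoDup_app.
  - apply Hf; left; auto.
  - apply IHl; auto.
    + intros; apply Hf; right; auto.
    + intros x y z Hx Hy; apply Hd; right; auto.
  - intros z Hz Hz'. apply in_flat_map in Hz'. destruct Hz' as [y [Hy Hzy]].
    apply (Hd a y z); simpl; auto. intro; subst; auto.
Qed.

Lemma NoDup_words k : NoDup (words d k).
Proof.
  induction k; simpl; [repeat constructor; simpl; auto|].
  apply NoDup_flat_map; auto.
  - intros x _. apply FinFun.Injective_map_NoDup; [|apply seq_NoDup].
    intros a b H. apply app_inj_tail in H. tauto.
  - intros x y z _ _ Hxy Hz Hz'. apply in_map_iff in Hz, Hz'.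
    destruct Hz as [i [<- _]], Hz' as [i' [H _]]. apply app_inj_tail in H. destruct H; congruence.
Qed.

Lemma NoDup_words_range a n : NoDup (flat_map (words d) (seq a n)).
Proof.
  apply NoDup_flat_map; [apply seq_NoDup|intros; apply NoDup_words|].
  intros x y z _ _ Hxy Hz Hz'. apply In_words in Hz, Hz'. destruct Hz, Hz'. congruence.
Qed.

Lemma In_verts_below n v :
  In v (verts_below d n) <-> (length v < n)%nat /\ Forall (fun i => (i < d)%nat) v.
Proof.
  unfold verts_below. rewrite in_flat_map. split.
  - intros [k [Hk Hv]]. apply in_seq in Hk. apply In_words in Hv. destruct Hv; split; auto; lia.
  - intros [H1 H2]. exists (length v). split; [apply in_seq; lia|]. apply In_words; auto.
Qed.

Definition child_blocks m := flat_map (fun i => map (cons i) (verts_below d m)) (seq 0 d).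

Lemma verts_below_S m : verts_below d (S m) = [] :: flat_map (words d) (seq 1 m).
Proof. reflexivity. Qed.

Lemma nonroot_verts_perm m : Permutation (flat_map (words d) (seq 1 m)) (child_blocks m).
Proof.
  apply NoDup_Permutation; [apply NoDup_words_range| |].
  - unfold child_blocks. apply NoDup_flat_map; [apply seq_NoDup| |].
    + intros. apply FinFun.Injective_map_NoDup; [|apply NoDup_words_range].
      intros a b Hab; inversion Hab; auto.
    + intros x y z _ _ Hxy Hz Hz'. apply in_map_iff in Hz, Hz'.
      destruct Hz as [w [<- _]], Hz' as [w' [Hq _]]. inversion Hq; congruence.
  - intros v. unfold child_blocks. rewrite in_flat_map, in_flat_map. split.
    + intros [k [Hk Hv]]. apply in_seq in Hk. apply In_words in Hv. destruct Hv as [Hl Hf].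
      destruct v as [|i w]; [simpl in Hl; lia|]. inversion Hf; subst.
      exists i. split; [apply in_seq; lia|]. apply in_map_iff. exists w; split; auto.
      apply In_verts_below. simpl in Hk; split; auto; lia.
    + intros [i [Hi Hv]]. apply in_seq in Hi. apply in_map_iff in Hv.
      destruct Hv as [w [<- Hw]]. apply In_verts_below in Hw. destruct Hw.
      exists (length (i :: w)). split; [apply in_seq; simpl; lia|].
      apply In_words. split; auto. constructor; auto; lia.
Qed.

Lemma active_root_radius0 c v : c [] = 0%nat -> active d c v -> v = [].
Proof.
  intros H0 H. induction H; auto. subst. rewrite H0 in H2.
  destruct s; simpl in *; auto; lia.
Qed.

(* Seen from child [i] of a root with radius [S j], the cone of the root
   covers the ball of radius [j] around [i]; this is the same as raising the
   radius of [i] to [max (c [i]) j]. *)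
Definition child_config (c : word -> nat) i j := upd (shift c i) [] (Nat.max (c [i]) j).

Lemma active_child_config c j : c [] = S j ->
  forall v, active d c v -> forall i w, v = i :: w -> active d (child_config c i j) w.
Proof.
  intros Hc v H. induction H; intros i w Hv; [discriminate|].
  destruct u as [|i' u'].
  - simpl in Hv. subst s. rewrite Hc in H1. simpl in H1. inversion H0; subst.
    apply (act_step d (child_config c i j) [] w); [constructor|auto|].
    unfold child_config. rewrite upd_eq. lia.
  - simpl in Hv. injection Hv as <- <-. specialize (IHactive i' u' eq_refl).
    apply act_step; auto. unfold child_config. destruct u' as [|a u''].
    + rewrite upd_eq. lia.
    + rewrite upd_other by discriminate. auto.
Qed.

Lemma active_of_child_config c j i : c [] = S j -> (i < d)%nat ->
  forall w, active d (child_config c i j) w -> active d c (i :: w).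
Proof.
  intros Hc Hi w H. induction H.
  - apply (act_step d c [] [i]); [constructor|repeat constructor; auto|]. rewrite Hc; simpl; lia.
  - destruct u as [|a u'].
    + unfold child_config in H1. rewrite upd_eq in H1. simpl.
      destruct (Nat.le_ge_cases (c [i]) j).
      * rewrite Nat.max_r in H1 by auto. apply (act_step d c [] (i :: s)); [constructor| |].
        -- constructor; auto.
        -- rewrite Hc. simpl; lia.
      * rewrite Nat.max_l in H1 by auto. apply (act_step d c [i] s); auto.
    + unfold child_config in H1. rewrite upd_other in H1 by discriminate. unfold shift in H1.
      change (i :: (a :: u') ++ s) with ((i :: a :: u') ++ s). apply act_step; auto.
Qed.

Lemma reach_iff_child_reach c j m : c [] = S j ->
  ((exists v, In v (words d (S m)) /\ active d c v) <->
   (exists i, In i (seq 0 d) /\ exists w, In w (words d m) /\ active d (child_config c i j) w)).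
Proof.
  intros Hc. split.
  - intros [v [Hv Ha]]. apply In_words in Hv. destruct Hv as [Hl Hf].
    destruct v as [|i w]; [simpl in Hl; lia|]. inversion Hf; subst.
    exists i. split; [apply in_seq; lia|]. exists w.
    split; [apply In_words; simpl in Hl; split; auto|].
    eapply active_child_config; eauto.
  - intros [i [Hi [w [Hw Ha]]]]. apply in_seq in Hi. exists (i :: w). split.
    + apply In_words in Hw. apply In_words. destruct Hw; split; simpl; auto. constructor; auto; lia.
    + apply (active_of_child_config c j i Hc); auto; lia.
Qed.

End Tree.

Lemma ind_iff (P Q : Prop) : (P <-> Q) -> ind P = ind Q.
Proof.
  intros H. unfold ind.
  destruct (excluded_middle_informative P), (excluded_middle_informative Q); tauto.
Qed.

Lemma ind_true (P : Prop) : P -> ind P = 1.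
Proof. intros. unfold ind. destruct (excluded_middle_informative P); tauto. Qed.

Lemma ind_false (P : Prop) : ~ P -> ind P = 0.
Proof. intros. unfold ind. destruct (excluded_middle_informative P); tauto. Qed.

Lemma ind_exists_list (E : nat -> Prop) l :
  ind (exists i, In i l /\ E i) = 1 - prodl (fun i => 1 - ind (E i)) l.
Proof.
  induction l as [|a l IH]; simpl.
  - rewrite ind_false by (intros [i [[] _]]). ring.
  - destruct (excluded_middle_informative (E a)) as [Ha|Ha].
    + rewrite !ind_true by eauto. ring.
    + assert (Hl : (exists i, (a = i \/ In i l) /\ E i) <-> exists i, In i l /\ E i).
      { split; [intros [i [[<-|Hi] He]]; [tauto|eauto]|intros [i [Hi He]]; eauto]. }
      rewrite (ind_iff _ _ Hl), IH, (ind_false _ Ha). ring.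
Qed.

(** * The recursion for the reach probabilities *)

Definition any_of (K : nat) (y : R) := 1 - (1 - y) ^ K.

Fixpoint reach_boost (d : nat) (p : nat -> R) (n k : nat) : R :=
  match n with
  | O => 1
  | S m => psum (fun r => p r * match Nat.max r k with
                                | O => 0
                                | S j => any_of d (reach_boost d p m j)
                                end) (S m)
           + (1 - psum p (S m))
  end.

Definition reach_given_root d p m rho :=
  match rho with O => 0 | S j => any_of d (reach_boost d p m j) end.

Lemma reach_boost_S d p m k : reach_boost d p (S m) k =
  psum (fun r => p r * reach_given_root d p m (Nat.max r k)) (S m) + (1 - psum p (S m)).
Proof. reflexivity. Qed.

Definition reach_expect d p T n k c := csum p T (verts_below d n) c
  (fun c1 => ind (exists v, In v (words d n) /\ active d (upd c1 [] (Nat.max (c1 []) k)) v)).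

Lemma psum_qtrunc p T n g : (n <= T)%nat -> (forall r, (n <= r)%nat -> g r = 1) ->
  psum (fun r => qtrunc p T r * g r) (S T) = psum (fun r => p r * g r) n + (1 - psum p n).
Proof.
  intros Hn Hg. rewrite psum_S, (psum_ext _ (fun r => p r * g r)).
  2:{ intros r Hr. unfold qtrunc. apply Nat.ltb_lt in Hr. rewrite Hr. auto. }
  unfold qtrunc. rewrite Nat.ltb_irrefl, (Hg T Hn).
  replace T with (n + (T - n))%nat by lia. rewrite !psum_split.
  rewrite (psum_ext (fun r => p (n + r)%nat * g (n + r)%nat) (fun r => p (n + r)%nat))
    by (intros; rewrite Hg by lia; ring).
  ring.
Qed.

Section ReachExpect.
Variables (d : nat) (p : nat -> R) (T : nat).
Hypothesis hd : (1 <= d)%nat.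

Lemma reach_boost_top n j : (n <= j)%nat -> reach_boost d p n j = 1.
Proof.
  revert j; induction n; intros j Hj; auto.
  rewrite reach_boost_S, (psum_ext _ p); [ring|].
  intros r Hr. unfold reach_given_root. destruct (Nat.max r j) eqn:E; [lia|].
  rewrite IHn by lia. unfold any_of. rewrite Rminus_diag, pow_i by lia. ring.
Qed.

(* The children's subtrees are disjoint blocks of independent radii, so the
   probability that none of them reaches depth [m] factorises. *)
Lemma csum_reach_given_root m j c :
  (forall k c, reach_expect d p T m k c = reach_boost d p m k) ->
  csum p T (flat_map (words d) (seq 1 m)) c
    (fun c1 => ind (exists v, In v (words d (S m)) /\ active d (upd c1 [] (S j)) v))
  = any_of d (reach_boost d p m j).
Proof.
  intros IH. unfold any_of.
  set (dies := fun c0 : word -> nat => 1 - ind (exists w, In w (words d m) /\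
                  active d (upd c0 [] (Nat.max (c0 []) j)) w)).
  rewrite (csum_ext _ _ _ _ _ (fun c1 => 1 - prodl (fun i => dies (shift c1 i)) (seq 0 d))).
  2:{ intros c1. rewrite (ind_iff _ _ (reach_iff_child_reach d (upd c1 [] (S j)) j m (upd_eq _ _ _))).
      (* [child_config] of the boosted root computes to the boosted shifted configuration *)
      rewrite ind_exists_list. reflexivity. }
  rewrite csum_one_minus, (csum_perm _ _ _ _ (nonroot_verts_perm d m)). unfold child_blocks.
  rewrite (csum_prodl p T (verts_below d m) (seq 0 d) (fun i c1 => dies (shift c1 i))).
  - rewrite (prodl_ext _ (fun _ => 1 - reach_boost d p m j)), prodl_const, length_seq; auto.
    intros i _. rewrite csum_relabel. unfold dies. rewrite csum_one_minus. f_equal. apply IH.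
  - apply seq_NoDup.
  - intros i v _ Hv c1 r. f_equal. apply functional_extensionality; intro w.
    unfold shift. apply upd_other. intro Heq. apply (Hv w); auto.
Qed.

Lemma reach_expect_eq n k c : (n <= T)%nat -> reach_expect d p T n k c = reach_boost d p n k.
Proof.
  revert k c. induction n as [|m IH]; intros k c HT.
  - apply ind_true. exists []. split; [left; auto|constructor].
  - unfold reach_expect. rewrite verts_below_S. cbn [csum]. rewrite reach_boost_S.
    rewrite (psum_ext _ (fun r => qtrunc p T r * reach_given_root d p m (Nat.max r k))).
    + apply psum_qtrunc; auto. intros r Hr. unfold reach_given_root.
      destruct (Nat.max r k) eqn:E; [lia|].
      rewrite reach_boost_top by lia. unfold any_of. rewrite Rminus_diag, pow_i by lia. ring.
    + intros r _. f_equal.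
      assert (Hroot : ~ In [] (flat_map (words d) (seq 1 m))).
      { intro H. apply in_flat_map in H. destruct H as [x [Hx Hw]]. apply In_words in Hw.
        apply in_seq in Hx. simpl in Hw. lia. }
      rewrite (csum_ext_at _ _ _ [] _ (fun c1 => ind (exists v, In v (words d (S m)) /\
        active d (upd c1 [] (Nat.max r k)) v)) _ Hroot).
      2:{ intros c1 Hc1. rewrite upd_eq in Hc1. rewrite Hc1. auto. }
      unfold reach_given_root. destruct (Nat.max r k) as [|j].
      * rewrite (csum_ext _ _ _ _ _ (fun _ => 0)), csum_const; auto.
        intros c1. apply ind_false. intros [v [Hv Ha]].
        apply active_root_radius0 in Ha; [|apply upd_eq]. subst.
        apply In_words in Hv. simpl in Hv. lia.
      * apply csum_reach_given_root. intros; apply IH; lia.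
Qed.

End ReachExpect.

Lemma reach_prob_eq d p n : (1 <= d)%nat -> reach_prob d p n = reach_boost d p n 0.
Proof.
  intros hd. rewrite <- (reach_expect_eq d p n hd n 0 (fun _ => 0%nat)) by lia.
  unfold reach_prob, reach_expect. apply csum_ext. intros c.
  rewrite Nat.max_0_r, upd_self. reflexivity.
Qed.

Lemma pow_unit_interval y k : 0 <= y <= 1 -> 0 <= y ^ k <= 1.
Proof. intros H. split; [apply pow_le; lra|]. rewrite <- (pow1 k). apply pow_incr; lra. Qed.

Lemma any_of_bounds K y : 0 <= y <= 1 -> 0 <= any_of K y <= 1.
Proof. intros. unfold any_of. pose proof (pow_unit_interval (1 - y) K ltac:(lra)). lra. Qed.

Lemma any_of_le K x y : 0 <= x <= y -> y <= 1 -> any_of K x <= any_of K y.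
Proof. intros. unfold any_of. pose proof (pow_incr (1 - y) (1 - x) K ltac:(lra)). lra. Qed.

Lemma any_of_mul K L y : any_of L (any_of K y) = any_of (K * L) y.
Proof. unfold any_of. rewrite pow_mult. do 3 f_equal. ring. Qed.

Lemma reach_given_root_S d p m j : reach_given_root d p m (S j) = any_of d (reach_boost d p m j).
Proof. reflexivity. Qed.

Section Monotonicity.
Variables (d : nat) (p : nat -> R).
Hypotheses (hp : forall k, 0 <= p k) (hp1 : forall n, psum p n <= 1).

Lemma reach_boost_bounds n k : 0 <= reach_boost d p n k <= 1.
Proof.
  revert k; induction n; intros k; [simpl; lra|].
  rewrite reach_boost_S. pose proof (hp1 (S n)).
  assert (Hr : forall r, 0 <= p r * reach_given_root d p n (Nat.max r k) <= p r).
  { intros r. pose proof (hp r). destruct (Nat.max r k) as [|j]; [simpl; lra|].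
    rewrite reach_given_root_S. pose proof (any_of_bounds d _ (IHn j)). nra. }
  pose proof (psum_nonneg _ (S n) (fun r => proj1 (Hr r))).
  pose proof (psum_le _ _ (S n) (fun r _ => proj2 (Hr r))). lra.
Qed.

Lemma reach_given_root_bounds m rho : 0 <= reach_given_root d p m rho <= 1.
Proof. destruct rho; [simpl; lra|]. apply any_of_bounds, reach_boost_bounds. Qed.

Lemma reach_boost_mono n k k' : (k <= k')%nat -> reach_boost d p n k <= reach_boost d p n k'.
Proof.
  revert k k'; induction n; intros k k' Hk; [simpl; lra|].
  rewrite !reach_boost_S. apply Rplus_le_compat_r, psum_le. intros r _.
  apply Rmult_le_compat_l; [apply hp|].
  destruct (Nat.max r k) as [|j1] eqn:E1, (Nat.max r k') as [|j2] eqn:E2; try lia.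
  - lra.
  - apply reach_given_root_bounds.
  - apply any_of_le; [split|]; try apply IHn; try apply reach_boost_bounds; lia.
Qed.

Lemma reach_given_root_mono m rho rho' :
  (rho <= rho')%nat -> reach_given_root d p m rho <= reach_given_root d p m rho'.
Proof.
  intros H. destruct rho as [|j1], rho' as [|j2]; try lia.
  - lra.
  - apply reach_given_root_bounds.
  - apply any_of_le; [split|]; try apply reach_boost_mono; try apply reach_boost_bounds; lia.
Qed.

Lemma reach_boost_S_le n k : reach_boost d p (S n) k <= reach_boost d p n k.
Proof.
  revert k; induction n; intros k.
  - pose proof (reach_boost_bounds 1 k). simpl reach_boost at 2. lra.
  - rewrite (reach_boost_S d p (S n)), (reach_boost_S d p n), (psum_S _ (S n)), (psum_S p (S n)).
    assert (psum (fun r => p r * reach_given_root d p (S n) (Nat.max r k)) (S n) <=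
            psum (fun r => p r * reach_given_root d p n (Nat.max r k)) (S n)).
    { apply psum_le. intros r _. apply Rmult_le_compat_l; [apply hp|].
      destruct (Nat.max r k); [simpl; lra|].
      apply any_of_le; [split|]; try apply IHn; apply reach_boost_bounds. }
    pose proof (reach_given_root_bounds (S n) (Nat.max (S n) k)). pose proof (hp (S n)). nra.
Qed.

Lemma reach_boost_antimono n n' k : (n <= n')%nat -> reach_boost d p n' k <= reach_boost d p n k.
Proof. induction 1; [lra|]. pose proof (reach_boost_S_le m k). lra. Qed.

Lemma reach_given_root_le_boost m j :
  reach_given_root d p m (S j) <= reach_boost d p (S m) (S j).
Proof.
  rewrite reach_boost_S. pose proof (reach_given_root_bounds m (S j)). pose proof (hp1 (S m)).
  assert (psum (fun r => reach_given_root d p m (S j) * p r) (S m) <=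
          psum (fun r => p r * reach_given_root d p m (Nat.max r (S j))) (S m)).
  { apply psum_le. intros r _. rewrite Rmult_comm.
    apply Rmult_le_compat_l; [apply hp|]. apply reach_given_root_mono. lia. }
  rewrite <- psum_scal in H1. nra.
Qed.

End Monotonicity.

(** * Survival *)

Lemma pow_one_minus_le_quadratic x K : 0 <= x <= 1 ->
  (1 - x) ^ K <= 1 - INR K * x + INR K ^ 2 * x ^ 2.
Proof.
  intros Hx. induction K; [simpl; lra|].
  rewrite S_INR. simpl pow. simpl pow in IHK. pose proof (pos_INR K).
  assert (0 <= 1 - INR K * x + INR K * (INR K * 1) * (x * (x * 1))) by nra.
  assert ((1 - x) * (1 - x) ^ K <=
          (1 - x) * (1 - INR K * x + INR K * (INR K * 1) * (x * (x * 1))))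
    by (apply Rmult_le_compat_l; lra).
  nra.
Qed.

Lemma psum_le_tail p f n M : (forall r, 0 <= f r <= p r) -> (forall n, psum p n <= 1) ->
  psum f M <= psum f n + (1 - psum p n).
Proof.
  intros Hf Hp. destruct (Nat.le_gt_cases M n).
  - pose proof (psum_mono f M n (fun r => proj1 (Hf r)) H). pose proof (Hp n). lra.
  - replace M with (n + (M - n))%nat by lia. rewrite !psum_split.
    pose proof (Hp (n + (M - n))%nat). rewrite psum_split in H0.
    pose proof (psum_le (fun r => f (n + r)%nat) (fun r => p (n + r)%nat) (M - n)
      (fun r _ => proj2 (Hf _))). lra.
Qed.

(* The root of radius [r >= 1] reaches as soon as one of its [d ^ r] descendants at
   depth [r] does, each independently with probability [eps]. *)
Definition cone_reach d eps r := match r with O => 0 | S _ => any_of (d ^ r) eps end.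

Section Survival.
Variables (d : nat) (p : nat -> R).
Hypotheses (hd : (2 <= d)%nat) (hp : forall k, 0 <= p k) (hp1 : forall n, psum p n <= 1).

Lemma any_of_leaves_le_reach_boost j m :
  (j <= m)%nat -> any_of (d ^ j) (reach_boost d p (m - j) 0) <= reach_boost d p m j.
Proof.
  revert m; induction j; intros m Hm.
  - rewrite Nat.sub_0_r. unfold any_of. simpl. lra.
  - destruct m as [|m']; [lia|]. simpl (S m' - S j)%nat.
    pose proof (reach_given_root_le_boost d p hp hp1 m' j) as Hroot.
    rewrite reach_given_root_S in Hroot.
    rewrite Nat.pow_succ_r', Nat.mul_comm, <- any_of_mul.
    pose proof (reach_boost_bounds d p hp hp1 (m' - j) 0).
    assert (any_of d (any_of (d ^ j) (reach_boost d p (m' - j) 0)) <=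
            any_of d (reach_boost d p m' j)).
    { apply any_of_le; [split|]; [apply any_of_bounds; lra|apply IHj; lia|].
      apply reach_boost_bounds; auto. }
    lra.
Qed.

Lemma reach_boost_lower_bound eps M :
  0 < eps <= 1 -> eps <= psum (fun r => p r * cone_reach d eps r) M ->
  forall n, eps <= reach_boost d p n 0.
Proof.
  intros He HM n. induction n as [n IH] using lt_wf_ind.
  destruct n as [|m]; [simpl; lra|].
  rewrite reach_boost_S.
  assert (Hcone : forall r, 0 <= p r * cone_reach d eps r <= p r).
  { intros r. pose proof (hp r). destruct r; [simpl; lra|unfold cone_reach].
    pose proof (any_of_bounds (d ^ S r) eps ltac:(lra)). nra. }
  pose proof (psum_le_tail p _ (S m) M Hcone hp1).
  assert (psum (fun r => p r * cone_reach d eps r) (S m) <=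
          psum (fun r => p r * reach_given_root d p m (Nat.max r 0)) (S m)).
  { apply psum_le. intros r Hr. apply Rmult_le_compat_l; [apply hp|].
    rewrite Nat.max_0_r. destruct r as [|r']; [simpl; lra|].
    unfold cone_reach. rewrite reach_given_root_S, Nat.pow_succ_r', Nat.mul_comm, <- any_of_mul.
    apply any_of_le; [split|]; [apply any_of_bounds; lra| |apply reach_boost_bounds; auto].
    apply Rle_trans with (any_of (d ^ r') (reach_boost d p (m - r') 0)).
    - apply any_of_le; [split|]; try lra; [apply IH; lia|apply reach_boost_bounds; auto].
    - apply any_of_leaves_le_reach_boost; lia. }
  lra.
Qed.

(* [eps = (M - 1) / S2] with [M], [S2] the first two moments of [d ^ R] on [R >= 1];
   it satisfies [eps M - eps^2 S2 = eps]. *)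
Lemma exists_reach_lower_bound N :
  1 < psum (fun r => p (S r) * INR d ^ S r) N ->
  exists eps, 0 < eps <= 1 /\ eps <= psum (fun r => p r * cone_reach d eps r) (S N).
Proof.
  intros HM.
  set (M := psum (fun r => p (S r) * INR d ^ S r) N) in *.
  set (S2 := psum (fun r => p (S r) * (INR d ^ S r) ^ 2) N).
  assert (Hd1 : 1 <= INR d) by (apply (le_INR 1 d); lia).
  assert (HMS : M <= S2).
  { apply psum_le. intros r _. pose proof (hp (S r)). pose proof (pow_R1_Rle (INR d) (S r) Hd1).
    set (y := INR d ^ S r) in *. replace (y ^ 2) with (y * y) by ring.
    assert (0 <= p (S r) * y * (y - 1)) by (apply Rmult_le_pos; [apply Rmult_le_pos|]; lra).
    nra. }
  set (eps := (M - 1) / S2).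
  assert (He : 0 < eps <= 1).
  { unfold eps. split; [apply Rdiv_lt_0_compat; lra|].
    apply Rmult_le_reg_r with S2; [lra|]. unfold Rdiv. rewrite Rmult_assoc, Rinv_l by lra. lra. }
  exists eps. split; auto.
  rewrite psum_shift. simpl (cone_reach d eps 0). rewrite Rmult_0_r, Rplus_0_l.
  apply Rle_trans with (psum (fun r => eps * (p (S r) * INR d ^ S r) +
                                       (- eps ^ 2) * (p (S r) * (INR d ^ S r) ^ 2)) N).
  - rewrite psum_plus, <- !psum_scal. fold M S2.
    assert (eps * S2 = M - 1) by (unfold eps; field; lra). nra.
  - apply psum_le. intros r _. unfold cone_reach, any_of.
    pose proof (pow_one_minus_le_quadratic eps (d ^ S r) ltac:(lra)). rewrite pow_INR in H.
    pose proof (hp (S r)). nra.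
Qed.

End Survival.

Lemma survives_pos_of_partial_mean_gt d p N :
  (2 <= d)%nat -> (forall k, 0 <= p k) -> (forall n, psum p n <= 1) ->
  sum_f_R0 (dR_term d p) N > 1 + p 0%nat -> survives_pos d p.
Proof.
  intros hd hp hp1 HN.
  rewrite sum_f_R0_psum, psum_shift in HN. unfold dR_term in HN. rewrite pow_O in HN.
  destruct (exists_reach_lower_bound d p hd hp N ltac:(lra)) as [eps [He Heps]].
  exists eps. split; [lra|]. intros n. rewrite reach_prob_eq by lia.
  pose proof (reach_boost_lower_bound d p hd hp hp1 eps (S N) He Heps n). lra.
Qed.

(** * Extinction *)

Fixpoint ball_card (d j : nat) : nat :=
  match j with O => 1%nat | S j' => (1 + ball_card d j' * d)%nat end.

Definition cone_card (d r : nat) : nat :=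
  match r with O => 0%nat | S r' => (ball_card d r' * d)%nat end.

Lemma ball_card_INR d j : (INR d - 1) * INR (ball_card d j) = INR d ^ S j - 1.
Proof.
  induction j; [simpl; ring|].
  cbn [ball_card]. rewrite plus_INR, mult_INR.
  replace ((INR d - 1) * (INR 1 + INR (ball_card d j) * INR d))
    with ((INR d - 1) + (INR d - 1) * INR (ball_card d j) * INR d) by (simpl; ring).
  rewrite IHj. simpl. ring.
Qed.

Lemma cone_card_INR d r : (INR d - 1) * INR (cone_card d r) = INR d * INR d ^ r - INR d.
Proof.
  destruct r; [simpl; ring|]. cbn [cone_card]. rewrite mult_INR.
  replace ((INR d - 1) * (INR (ball_card d r) * INR d))
    with ((INR d - 1) * INR (ball_card d r) * INR d) by ring.
  rewrite ball_card_INR. simpl. ring.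
Qed.

Lemma tangent_le_pow x K : 0 <= x <= 1 -> 0 <= x ^ K - 1 + INR K * (1 - x).
Proof.
  intros Hx. induction K; [simpl; lra|].
  rewrite S_INR. simpl pow. pose proof (pow_unit_interval x K Hx).
  assert (0 <= (1 - x) * (1 - x ^ K)) by (apply Rmult_le_pos; lra). nra.
Qed.

Lemma tangent_le_pow_sq x K : 0 <= x <= 1 -> (2 <= K)%nat ->
  (1 - x) ^ 2 <= x ^ K - 1 + INR K * (1 - x).
Proof.
  intros Hx HK. induction HK; [simpl; lra|].
  rewrite S_INR. simpl pow. pose proof (pow_unit_interval x m Hx).
  assert (0 <= (1 - x) * (1 - x ^ m)) by (apply Rmult_le_pos; lra). nra.
Qed.

(* [E d^R <= 2 - 1/d] is [E (cone_card R) <= 1]; truncation at [N] costs at most twice the tail. *)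
Lemma psum_cone_card_le d p N : (2 <= d)%nat ->
  psum (fun r => p r * INR d ^ r) (S N) <= 2 - 1 / INR d -> psum p (S N) <= 1 ->
  psum (fun r => p r * INR (cone_card d r)) (S N) <= 1 + 2 * (1 - psum p (S N)).
Proof.
  intros hd H HP. assert (Hd2 : 2 <= INR d) by (apply (le_INR 2 d); lia).
  assert (E : (INR d - 1) * psum (fun r => p r * INR (cone_card d r)) (S N) =
              INR d * psum (fun r => p r * INR d ^ r) (S N) - INR d * psum p (S N)).
  { rewrite psum_scal, (psum_ext _ (fun r => INR d * (p r * INR d ^ r) + (- INR d) * p r)).
    - rewrite psum_plus, <- !psum_scal. ring.
    - intros r _. replace ((INR d - 1) * (p r * INR (cone_card d r)))
        with (p r * ((INR d - 1) * INR (cone_card d r))) by ring.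
      rewrite cone_card_INR. ring. }
  apply Rmult_le_reg_l with (INR d - 1); [lra|]. rewrite E.
  assert (INR d * (2 - 1 / INR d) = 2 * INR d - 1) by (field; lra).
  assert (INR d * psum (fun r => p r * INR d ^ r) (S N) <= INR d * (2 - 1 / INR d))
    by (apply Rmult_le_compat_l; lra).
  nra.
Qed.

(* Jensen with a quantitative gap: the term [r0] has [cone_card >= 2], hence strict convexity. *)
Lemma psum_pow_cone_card_ge d p N r0 eps x : (forall k, 0 <= p k) -> (2 <= d)%nat ->
  0 < eps <= 1 -> 0 <= x <= 1 - eps -> (1 <= r0 <= N)%nat ->
  1 - psum p (S N) <= p r0 * eps ^ 2 / 6 ->
  psum (fun r => p r * INR (cone_card d r)) (S N) <= 1 + 2 * (1 - psum p (S N)) ->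
  psum p (S N) <= 1 ->
  x + p r0 * eps ^ 2 / 2 <= psum (fun r => p r * x ^ cone_card d r) (S N).
Proof.
  intros hp hd He Hx Hr HP HK HP1.
  set (gap := fun r => p r * (x ^ cone_card d r - 1 + INR (cone_card d r) * (1 - x))).
  rewrite (psum_ext (fun r => p r * x ^ cone_card d r)
    (fun r => (p r + (- (1 - x)) * (p r * INR (cone_card d r))) + gap r))
    by (intros; unfold gap; ring).
  rewrite !psum_plus, <- psum_scal.
  assert (Hgap : forall r, 0 <= gap r).
  { intros r. apply Rmult_le_pos; [apply hp|apply tangent_le_pow; lra]. }
  pose proof (psum_ge_term gap (S N) r0 Hgap ltac:(lia)).
  assert (HK2 : (2 <= cone_card d r0)%nat).
  { destruct r0; [lia|]. simpl. destruct r0; simpl; nia. }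
  pose proof (tangent_le_pow_sq x (cone_card d r0) ltac:(lra) HK2).
  assert (eps ^ 2 <= (1 - x) ^ 2) by (apply pow_incr; lra).
  assert (p r0 * eps ^ 2 <= gap r0) by (unfold gap; pose proof (hp r0); nra).
  assert ((1 - x) * psum (fun r => p r * INR (cone_card d r)) (S N) <=
          (1 - x) * (1 + 2 * (1 - psum p (S N)))) by (apply Rmult_le_compat_l; lra).
  assert ((1 - x) * (2 * (1 - psum p (S N))) <= 2 * (1 - psum p (S N))).
  { assert (0 <= 1 - psum p (S N)) by lra. nra. }
  nra.
Qed.

Definition miss d p n k := 1 - reach_boost d p n k.

Section Extinction.
Variables (d : nat) (p : nat -> R).
Hypotheses (hd : (2 <= d)%nat) (hp : forall k, 0 <= p k) (hp1 : forall n, psum p n <= 1).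

Lemma miss_bounds n k : 0 <= miss d p n k <= 1.
Proof. unfold miss. pose proof (reach_boost_bounds d p hp hp1 n k). lra. Qed.

Lemma miss_mono n n' : (n <= n')%nat -> miss d p n 0 <= miss d p n' 0.
Proof. intros. unfold miss. pose proof (reach_boost_antimono d p hp hp1 n n' 0 H). lra. Qed.

Lemma miss_S m k :
  miss d p (S m) k = psum (fun r => p r * (1 - reach_given_root d p m (Nat.max r k))) (S m).
Proof.
  unfold miss. rewrite reach_boost_S.
  rewrite (psum_ext (fun r => p r * (1 - reach_given_root d p m (Nat.max r k)))
    (fun r => p r + (-1) * (p r * reach_given_root d p m (Nat.max r k))))
    by (intros; ring).
  rewrite psum_plus, <- psum_scal. ring.
Qed.

Lemma one_minus_reach_given_root_S m k :
  1 - reach_given_root d p m (S k) = miss d p m k ^ d.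
Proof. rewrite reach_given_root_S. unfold any_of, miss. ring. Qed.

(* Boosting the root radius to [S k] keeps it dead if the root dies with its own
   radius and, independently, the [d] children die with radius boosted to [k]. *)
Lemma miss_S_mul_le m k : miss d p (S m) 0 * miss d p m k ^ d <= miss d p (S m) (S k).
Proof.
  rewrite !miss_S, Rmult_comm, psum_scal. apply psum_le. intros r _.
  rewrite Nat.max_0_r, <- one_minus_reach_given_root_S.
  pose proof (reach_given_root_bounds d p hp hp1 m r).
  pose proof (reach_given_root_bounds d p hp hp1 m (S k)). pose proof (hp r).
  destruct (Nat.le_ge_cases r (S k)).
  - rewrite Nat.max_r by auto.
    assert ((1 - reach_given_root d p m r) * (1 - reach_given_root d p m (S k)) <=
            1 - reach_given_root d p m (S k)) by nra. nra.
  - rewrite Nat.max_l by auto.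
    assert ((1 - reach_given_root d p m r) * (1 - reach_given_root d p m (S k)) <=
            1 - reach_given_root d p m r) by nra. nra.
Qed.

Lemma miss_pow_ball_card_le j m : (j <= m)%nat -> miss d p (m - j) 0 ^ ball_card d j <= miss d p m j.
Proof.
  revert m; induction j; intros m Hm.
  - rewrite Nat.sub_0_r. simpl. lra.
  - destruct m as [|m']; [lia|]. simpl (S m' - S j)%nat.
    assert (Hx : 0 <= miss d p (m' - j) 0 <= 1) by apply miss_bounds.
    cbn [ball_card]. rewrite pow_add, pow_1, pow_mult.
    apply Rle_trans with (miss d p (S m') 0 * miss d p m' j ^ d); [|apply miss_S_mul_le].
    apply Rmult_le_compat; [lra|apply pow_le, pow_le; lra|apply miss_mono; lia|].
    apply pow_incr. split; [apply pow_le; lra|apply IHj; lia].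
Qed.

(* By [miss_pow_ball_card_le], a root of radius [r <= N] dies out if each of the
   [cone_card d r] vertices of its cone dies out within [m - N] generations. *)
Lemma psum_pow_cone_card_le_miss N m : (N <= m)%nat ->
  psum (fun r => p r * miss d p (m - N) 0 ^ cone_card d r) (S N) <= miss d p (S m) 0.
Proof.
  intros HN. rewrite miss_S.
  set (x := miss d p (m - N) 0).
  assert (Hx : 0 <= x <= 1) by apply miss_bounds.
  apply Rle_trans with (psum (fun r => p r * (1 - reach_given_root d p m (Nat.max r 0))) (S N)).
  - apply psum_le. intros r Hr. apply Rmult_le_compat_l; [apply hp|]. rewrite Nat.max_0_r.
    destruct r as [|r']; [simpl; lra|].
    rewrite one_minus_reach_given_root_S. cbn [cone_card]. rewrite pow_mult.
    apply pow_incr. split; [apply pow_le; lra|].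
    apply Rle_trans with (miss d p (m - r') 0 ^ ball_card d r').
    + apply pow_incr. split; [lra|]. apply miss_mono. lia.
    + apply miss_pow_ball_card_le. lia.
  - apply psum_mono; [|lia]. intros r.
    pose proof (hp r). pose proof (reach_given_root_bounds d p hp hp1 m (Nat.max r 0)). nra.
Qed.

Section LinearGrowth.
Variables (eps : R) (r0 N : nat).
Hypotheses (He : 0 < eps <= 1) (Hr0 : (1 <= r0 <= N)%nat)
  (Htail : 1 - psum p (S N) <= p r0 * eps ^ 2 / 6)
  (Hmean : psum (fun r => p r * INR d ^ r) (S N) <= 2 - 1 / INR d)
  (Hsurv : forall n, eps <= reach_boost d p n 0).

Lemma miss_linear_growth k : INR k * (p r0 * eps ^ 2 / 2) <= miss d p (k * S N) 0.
Proof.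
  induction k; [simpl; pose proof (miss_bounds 0 0); lra|].
  replace (S k * S N)%nat with (S (k * S N + N)) by lia.
  pose proof (psum_pow_cone_card_le_miss N (k * S N + N) ltac:(lia)) as Hstep.
  replace (k * S N + N - N)%nat with (k * S N)%nat in Hstep by lia.
  pose proof (miss_bounds (k * S N) 0).
  assert (miss d p (k * S N) 0 <= 1 - eps) by (unfold miss; pose proof (Hsurv (k * S N)); lra).
  pose proof (psum_pow_cone_card_ge d p N r0 eps (miss d p (k * S N) 0) hp hd He
    ltac:(lra) Hr0 Htail (psum_cone_card_le d p N hd Hmean (hp1 (S N))) (hp1 (S N))).
  rewrite S_INR. lra.
Qed.

End LinearGrowth.

Lemma reach_boost_small r0 (hsum : infinite_sum p 1) :
  (1 <= r0)%nat -> 0 < p r0 ->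
  (forall n, psum (fun r => p r * INR d ^ r) n <= 2 - 1 / INR d) ->
  forall eps, 0 < eps <= 1 -> exists n, reach_boost d p n 0 < eps.
Proof.
  intros Hr0 Hpr0 Hmean eps He.
  apply NNPP. intros Hno.
  assert (Hsurv : forall n, eps <= reach_boost d p n 0).
  { intros n. apply Rnot_lt_le. intro; apply Hno; eauto. }
  assert (Hpe : 0 < p r0 * eps ^ 2) by (apply Rmult_lt_0_compat; [|apply pow_lt]; lra).
  set (g := p r0 * eps ^ 2 / 2).
  assert (Hg : 0 < g) by (unfold g; lra).
  destruct (hsum (p r0 * eps ^ 2 / 6) ltac:(lra)) as [N0 HN0].
  set (N := Nat.max N0 r0).
  specialize (HN0 N ltac:(lia)). rewrite sum_f_R0_psum in HN0.
  unfold R_dist in HN0. apply Rabs_def2 in HN0.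
  destruct (archimed_cor1 g Hg) as [k [Hk Hk0]].
  pose proof (miss_linear_growth eps r0 N He ltac:(lia) ltac:(lra) (Hmean (S N)) Hsurv k).
  pose proof (miss_bounds (k * S N) 0).
  assert (0 < INR k) by (apply lt_0_INR; lia).
  assert (1 < INR k * g).
  { apply Rmult_lt_reg_l with (/ INR k); [apply Rinv_0_lt_compat; lra|].
    rewrite <- Rmult_assoc, Rinv_l, Rmult_1_l, Rmult_1_r by lra. lra. }
  fold g in H. lra.
Qed.

End Extinction.

Lemma exists_positive_radius p : (forall k, 0 <= p k) -> infinite_sum p 1 -> p 0%nat < 1 ->
  exists r0, (1 <= r0)%nat /\ 0 < p r0.
Proof.
  intros hp hsum hp0. apply NNPP. intros Hno.
  destruct (hsum (1 - p 0%nat) ltac:(lra)) as [N HN]. specialize (HN N ltac:(lia)).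
  rewrite sum_f_R0_psum, psum_shift, (psum_ext _ (fun _ => 0)), psum_const0 in HN.
  - unfold R_dist in HN. apply Rabs_def2 in HN. lra.
  - intros r _. pose proof (hp (S r)).
    destruct (Rle_lt_or_eq_dec 0 (p (S r)) H) as [Hlt|]; auto.
    exfalso. apply Hno. exists (S r). split; [lia|auto].
Qed.

Lemma dies_as_of_mean_le d p l : (2 <= d)%nat -> (forall k, 0 <= p k) ->
  infinite_sum p 1 -> p 0%nat < 1 ->
  infinite_sum (dR_term d p) l -> l <= 2 - 1 / INR d -> dies_as d p.
Proof.
  intros hd hp hsum hp0 Hl Hl2.
  pose proof (psum_le_infinite_sum p 1 hp hsum) as hp1.
  assert (Hmean : forall n, psum (fun r => p r * INR d ^ r) n <= 2 - 1 / INR d).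
  { intros n. enough (psum (dR_term d p) n <= l) by (unfold dR_term in *; lra).
    apply psum_le_infinite_sum; auto. intros r. apply Rmult_le_pos; [auto|apply pow_le, pos_INR]. }
  destruct (exists_positive_radius p hp hsum hp0) as [r0 [Hr0 Hpr0]].
  intros eps Heps.
  destruct (reach_boost_small d p hd hp hp1 r0 hsum Hr0 Hpr0 Hmean (Rmin eps 1))
    as [n0 Hn0]; [split; [apply Rmin_pos; lra|apply Rmin_r]|].
  exists n0. intros n Hn. unfold R_dist. rewrite reach_prob_eq, Rminus_0_r by lia.
  pose proof (reach_boost_antimono d p hp hp1 n0 n 0 Hn).
  pose proof (reach_boost_bounds d p hp hp1 n 0). pose proof (Rmin_l eps 1).
  rewrite Rabs_right by lra. lra.
Qed.

Theorem theorem1 (d : nat) (p : nat -> R)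
  (hd : (2 <= d)%nat)
  (hp : forall k, 0 <= p k)
  (hsum : infinite_sum p 1)
  (hp0 : 0 < p 0%nat < 1) :
  ((* (I): E(d^R) > 1 + p_0, the expectation possibly infinite *)
   (exists N, sum_f_R0 (dR_term d p) N > 1 + p 0%nat) -> survives_pos d p)
  /\
  ((* (II): E(d^R) <= 2 - 1/d *)
   (exists l, infinite_sum (dR_term d p) l /\ l <= 2 - 1 / INR d) -> dies_as d p).
Proof.
  split.
  - intros [N HN]. apply (survives_pos_of_partial_mean_gt d p N hd hp); auto.
    apply psum_le_infinite_sum; auto.
  - intros [l [Hl Hl2]]. apply (dies_as_of_mean_le d p l); tauto.
Qed.
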